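(* Let $f:\mathbb{R}^n\to(-\infty,+\infty]$ be proper, lower semicontinuous and prox-bounded with threshold $\lambda_f>0$, let $0<\lambda<\lambda_f$ and let $U\subseteq\mathbb{R}^n$ be a nonempty open convex set. Then $\partial_p^\lambda f(x)$ is a singleton for every $x\in U$ if and only if $h_\lambda f=f$ on $U$ and $f$ is differentiable on $U$. Consequently, $\partial_p^\lambda f(x)$ is a singleton for every $x\in\mathbb{R}^n$ if and only if $f+\lambda^{-1}j$ is convex and $f$ is differentiable on $\mathbb{R}^n$.
   Context: $j:=\frac12\|\cdot\|^2$. $e_\lambda f(x):=\inf_y\{f(y)+\frac1{2\lambda}\|y-x\|^2\}$; prox-bounded with threshold $\lambda_f=\sup\{\lambda>0:e_\lambda f(x)>-\infty\text{ for some }x\}$. $v\in\partial_p^\lambda f(x)$ iff $x\in\operatorname{dom}f$ and $f(y)\ge f(x)+\langle v,y-x\rangle-\frac1{2\lambda}\|y-x\|^2$ for all $y$. $h_\lambda f:=-e_\lambda(-e_\lambda f)$ is the $\lambda$-proximal hull; $f$ is called $\lambda$-proximal at a point if $h_\lambda f$ and $f$ agree there. *)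

From HB Require Import structures.
From mathcomp Require Import all_boot all_order all_algebra.
From mathcomp Require Import all_classical all_reals all_analysis.
Set Implicit Arguments. Unset Strict Implicit. Unset Printing Implicit Defensive.
Import Order.TTheory GRing.Theory Num.Theory.
Import numFieldNormedType.Exports.
Local Open Scope classical_set_scope.
Local Open Scope ring_scope.

Section Prox.
Variables (R : realType) (n : nat).
Notation V := 'rV[R]_n.

Definition inner (x y : V) : R := \sum_(i < n) x ord0 i * y ord0 i.
Definition sqnorm (x : V) : R := inner x x.

Definition j (x : V) : R := sqnorm x / 2.

Definition proper_efun (f : V -> \bar R) : Prop :=
  (forall x, f x != -oo%E) /\ (exists x, f x \is a fin_num).

Definition moreau (lam : R) (f : V -> \bar R) (x : V) : \bar R :=
  ereal_inf [set (f y + (sqnorm (y - x) / (2 * lam))%:E)%E | y in [set: V]].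

Definition prox_bounded (f : V -> \bar R) : Prop :=
  exists lam : R, 0 < lam /\ exists x, (-oo < moreau lam f x)%E.

Definition prox_threshold (f : V -> \bar R) : \bar R :=
  ereal_sup [set lam%:E | lam in [set lam : R | 0 < lam /\ exists x, (-oo < moreau lam f x)%E]].

Definition prox_subdiff (lam : R) (f : V -> \bar R) (x : V) : set V :=
  [set v | (f x < +oo)%E /\
     forall y, (f x + (inner v (y - x) - sqnorm (y - x) / (2 * lam))%:E <= f y)%E].

Definition prox_hull (lam : R) (f : V -> \bar R) (x : V) : \bar R :=
  (- moreau lam (fun y => - moreau lam f y) x)%E.

Definition convex_efun (g : V -> \bar R) : Prop :=
  forall (x y : V) (t : R), 0 <= t <= 1 ->
    let z := t *: x + (1 - t) *: y in
    (g z <= t%:E * g x + (1 - t)%:E * g y)%E.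

Definition ediff_at (f : V -> \bar R) (x : V) : Prop :=
  f x \is a fin_num /\ differentiable (fun y => fine (f y)) x.

End Prox.

From HB Require Import structures.
From mathcomp Require Import all_boot all_order all_algebra.
From mathcomp Require Import all_classical all_reals all_analysis.
From mathcomp Require Import ring lra.
Import Order.TTheory GRing.Theory Num.Theory.
Import numFieldNormedType.Exports.
Local Open Scope classical_set_scope.
Local Open Scope ring_scope.
Set Implicit Arguments. Unset Strict Implicit. Unset Printing Implicit Defensive.

(* A vector [v] is a lam-proximal subgradient of [f] at [x] exactly when the
   quadratic [y |-> f x + <v, y - x> - |y - x|^2 / (2 lam)] lies below [f] and
   touches it at [x].  Such a touching quadratic forces [h_lam f x = f x]
   (compare both envelopes at [x + lam v]); conversely [h_lam f x = f x] provides
   quadratics touching [f] at [x] up to any [eps], and when [f] is differentiable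
   one-sided difference quotients pin their slopes, as well as every genuine
   subgradient, to the gradient.  If subgradients exist near [x] and are unique
   at [x], they converge to it: otherwise, retracted to the unit ball, they would
   cluster at some [w <> 0] with [v0 + w] a second subgradient at [x].  The
   touching quadratics at [x] and [x + h] then squeeze [f (x + h) - f x] to first
   order, which gives differentiability.  Globally, touching quadratics at every
   point make [f + j / lam] a supremum of affine functions that is attained at
   each point, hence convex; conversely convexity of [f + j / lam] along a segment
   turns the gradient into a subgradient. *)

Section InnerProduct.
Variables (R : realType) (n : nat).
Notation V := 'rV[R]_n.
Implicit Types (a b u : V) (k : R).

Lemma innerC a b : inner a b = inner b a.
Proof. by apply: eq_bigr => i _; rewrite mulrC. Qed.

Lemma inner_is_linear a : linear (inner a).
Proof.
move=> k u b; rewrite /inner scaler_sumr -big_split /=.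
by apply: eq_bigr => i _; rewrite !mxE mulrDr mulrCA.
Qed.

HB.instance Definition _ a :=
  GRing.isLinear.Build R V R *:%R (inner a) (@inner_is_linear a).

Lemma innerDr a b u : inner a (b + u) = inner a b + inner a u.
Proof. exact: linearD. Qed.

Lemma innerBr a b u : inner a (b - u) = inner a b - inner a u.
Proof. exact: linearB. Qed.

Lemma innerNr a b : inner a (- b) = - inner a b.
Proof. exact: linearN. Qed.

Lemma innerZr k a b : inner a (k *: b) = k * inner a b.
Proof. exact: linearZ. Qed.

Lemma innerDl a b u : inner (a + b) u = inner a u + inner b u.
Proof. by rewrite !(innerC _ u) innerDr. Qed.

Lemma innerBl a b u : inner (a - b) u = inner a u - inner b u.
Proof. by rewrite !(innerC _ u) innerBr. Qed.

Lemma innerZl k a b : inner (k *: a) b = k * inner a b.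
Proof. by rewrite !(innerC _ b) innerZr. Qed.

Lemma sqnorm_ge0 a : 0 <= sqnorm a.
Proof. by rewrite sumr_ge0 // => i _; rewrite -expr2 sqr_ge0. Qed.

Lemma sqnorm_eq0 a : sqnorm a = 0 -> a = 0.
Proof.
move/eqP; rewrite psumr_eq0 => [/allP a0|i _]; last by rewrite -expr2 sqr_ge0.
apply/rowP => i; have := a0 i (mem_index_enum _).
by rewrite /= mulf_eq0 orbb mxE => /eqP.
Qed.

Lemma sqnormD a b : sqnorm (a + b) = sqnorm a + 2 * inner a b + sqnorm b.
Proof. rewrite /sqnorm innerDl !innerDr (innerC b a); ring. Qed.

Lemma sqnormB a b : sqnorm (a - b) = sqnorm a - 2 * inner a b + sqnorm b.
Proof. rewrite /sqnorm innerBl !innerBr (innerC b a); ring. Qed.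

Lemma sqnormN a : sqnorm (- a) = sqnorm a.
Proof. by rewrite /sqnorm innerNr (innerC _ a) innerNr opprK. Qed.

Lemma sqnormZ k a : sqnorm (k *: a) = k ^+ 2 * sqnorm a.
Proof. rewrite /sqnorm innerZl innerZr; ring. Qed.

Lemma inner_inj a b : (forall u, inner a u = inner b u) -> a = b.
Proof.
move=> ab; apply/eqP; rewrite -subr_eq0; apply/eqP/sqnorm_eq0.
by rewrite /sqnorm innerBl !ab subrr.
Qed.

(* [`|_|] is the sup norm of the matrix space, hence the factor [n]. *)
Lemma ler_norm_inner a b : `|inner a b| <= n%:R * `|a| * `|b|.
Proof.
have coord_le u i : `|u ord0 i| <= `|u|.
  by rewrite [X in _ <= X]mx_normrE; apply/bigmax_geP; right; exists (ord0, i).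
rewrite (le_trans (ler_norm_sum _ _ _)) //.
rewrite -mulrA -[n in n%:R]card_ord mulr_natl -sumr_const.
by apply: ler_sum => i _; rewrite normrM ler_pM.
Qed.

Lemma sqnorm_le a : sqnorm a <= n%:R * `|a| ^+ 2.
Proof. by rewrite expr2 mulrA (le_trans (ler_norm _)) ?ler_norm_inner. Qed.

Lemma inner_continuous a : continuous (inner a).
Proof.
apply: bounded_linear_continuous; exists (n%:R * `|a|); split => // M M_gt.
near=> u; apply: le_trans (ler_norm_inner a u) _.
by rewrite (le_trans _ (ltW M_gt)) // ler_piMr ?mulr_ge0.
Unshelve. all: by end_near.
Qed.

End InnerProduct.

Section Calculus.
Variables (R : realType) (n : nat).
Notation V := 'rV[R]_n.
Implicit Types (g : V -> R) (x h : V).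

Lemma near_right0_mulr_lt (K e : R) : 0 < e -> \forall t \near 0^'+, t * K < e.
Proof.
move=> e_gt0; have K1_gt0 : 0 < `|K| + 1 by rewrite ltr_pwDr.
near=> t; have t_gt0 : 0 < t by near: t; exact: nbhs_right_gt.
have : t < e / (`|K| + 1) by near: t; apply: nbhs_right_lt; rewrite divr_gt0.
rewrite ltr_pdivlMr // => lt_te; apply: le_lt_trans lt_te.
by rewrite (le_trans (ler_norm _)) // normrM gtr0_norm // ler_pM2l // lerDl.
Unshelve. all: by end_near.
Qed.

Lemma near_right0_shift (P : set V) x h :
  (\forall y \near x, P y) -> \forall t \near 0^'+, P (x + t *: h).
Proof.
move=> Px; apply: (@cvg_at_right_filter _ _ (fun t : R => x + t *: h) 0 x) Px.
rewrite -[x in _ --> x]addr0 -(scale0r h).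
by apply: cvgD; [exact: cvg_cst | apply: cvgZ; [exact: cvg_id | exact: cvg_cst]].
Qed.

Lemma diff_quotient_near g x h : differentiable g x -> forall e, 0 < e ->
  \forall t \near 0^'+, `|(g (x + t *: h) - g x) / t - 'd g x h| < e.
Proof.
move=> dg e e_gt0.
have /cvg_dnbhs_at_right/cvgrPdist_lt/(_ e e_gt0) := diff_derivable dg (v := h).
rewrite -/(derive g x h) deriveE //; apply: filterS => t.
by rewrite distrC (addrC x) mulrC.
Qed.

Definition grad g x : V := \row_i 'd g x (delta_mx 0 i).

Lemma gradE g x h : 'd g x h = inner (grad g x) h.
Proof.
rewrite {1}(row_sum_delta h) linear_sum; apply: eq_bigr => i _.
by rewrite linearZ /= mxE mulrC.
Qed.

Lemma differentiable_of_inner_remainder g x (v : V) :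
  (forall e, 0 < e -> \forall h \near (0 : V), `|g (x + h) - g x - inner v h| <= e * `|h|) ->
  differentiable g x.
Proof.
move=> small_rem.
have lin_approx : g \o shift x = cst (g x) + inner v +o_ (0 : V) id.
  apply/eqaddoP => e e_gt0; apply: filterS (small_rem e e_gt0) => h.
  by rewrite !fctE /= opprD addrA (addrC h).
have inner_v_cont := @inner_continuous _ _ v.
by apply/diff_locallyP; rewrite (diff_unique inner_v_cont lin_approx).
Qed.

End Calculus.

Lemma cluster_closed (T : topologicalType) (F : set_system T) (A : set T) :
  closed A -> F A -> cluster F `<=` A.
Proof. by move=> cA FA p; rewrite clusterE => /(_ A FA); rewrite -(closure_id A).1. Qed.

Lemma cluster_of_bounded_seq (R : realType) (n : nat) (w_ : nat -> 'rV[R]_n) (M : R) :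
  (forall k, `|w_ k| <= M) -> exists w, cluster (w_ @ \oo) w.
Proof.
move=> w_le; set A := [set u : 'rV[R]_n | `|u| <= M].
have A_compact : compact A.
  apply: bounded_closed_compact.
    exists M; split; first exact: num_real.
    by move=> M' M'_gt u /le_trans; apply; exact: ltW.
  exact: (continuous_closedP (fun u : 'rV[R]_n => `|u|)).1 norm_continuous _
    (@closed_le _ M).
have [w [_ w_cl]] : A `&` cluster (w_ @ \oo) !=set0.
  by apply: A_compact; exists 0%N => // k _; exact: w_le.
by exists w.
Qed.

Lemma squeeze_harmonic (R : realType) (r_ : nat -> R) (C : R) :
  (forall k, 0 <= r_ k <= C * harmonic k) -> r_ @ \oo --> 0.
Proof.
move=> r_bd; apply: (@squeeze_cvgr _ _ _ _ (cst 0) (fun k => C * harmonic k) r_).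
- by apply: filterE => k; exact: r_bd.
- exact: cvg_cst.
- by rewrite -(mulr0 C); apply: cvgM; [exact: cvg_cst | exact: cvg_harmonic].
Qed.

Section RadialRetraction.
Variables (R : realType) (n : nat).
Notation V := 'rV[R]_n.

Definition ball_retract (s : V) : V := (Num.max 1 `|s|)^-1 *: s.

Lemma max1_gt0 (r : R) : 0 < Num.max 1 r.
Proof. by rewrite lt_max ltr01. Qed.

Lemma norm_ball_retract s : `|ball_retract s| = Num.min 1 `|s|.
Proof.
rewrite normrZ normfV gtr0_norm ?max1_gt0 //.
have [_|s_gt1] := leP `|s| 1; first by rewrite invr1 mul1r.
by rewrite mulVf // gt_eqF // (lt_trans ltr01).
Qed.

End RadialRetraction.

Lemma convex_of_supporting_affine (R : realType) (n : nat) (phi : 'rV[R]_n -> R) :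
  (forall x, exists s, forall w, phi x + inner s (w - x) <= phi w) ->
  forall x y t, 0 <= t <= 1 ->
  phi (t *: x + (1 - t) *: y) <= t * phi x + (1 - t) * phi y.
Proof.
move=> supp x y t /andP[t_ge0 t_le1]; set z := t *: x + (1 - t) *: y.
have [s supp_z] := supp z.
have zx : x - z = (1 - t) *: (x - y) by apply/rowP => i; rewrite !mxE; ring.
have zy : y - z = - t *: (x - y) by apply/rowP => i; rewrite !mxE; ring.
have t1_ge0 : 0 <= 1 - t by rewrite subr_ge0.
have := ler_wpM2l t_ge0 (supp_z x); have := ler_wpM2l t1_ge0 (supp_z y).
rewrite zx zy !innerZr; nra.
Qed.

Section ProximalSubdifferential.
Variables (R : realType) (n : nat) (lam : R) (f : 'rV[R]_n -> \bar R).
Hypothesis lam_gt0 : 0 < lam.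
Notation V := 'rV[R]_n.
Notation fin_f := (fun y => fine (f y)).
Implicit Types (x y z w v h : V).

Lemma prox_subdiff_fine_le x v y : prox_subdiff lam f x v ->
  f x \is a fin_num -> f y \is a fin_num ->
  fine (f x) + inner v (y - x) - sqnorm (y - x) / (2 * lam) <= fine (f y).
Proof.
move=> [_ /(_ y)] + /fineK fx /fineK fy.
by rewrite -fx -fy -EFinD lee_fin addrA.
Qed.

Lemma prox_subdiff_fin_num x v : f x != -oo%E -> prox_subdiff lam f x v ->
  f x \is a fin_num.
Proof. by move=> fx [fx_lt _]; rewrite fin_numE fx lt_eqF. Qed.

Lemma moreau_le z w : (moreau lam f z <= f w + (sqnorm (w - z) / (2 * lam))%:E)%E.
Proof. by apply: ereal_inf_lbound; exists w. Qed.

Lemma prox_hull_le x : (prox_hull lam f x <= f x)%E.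
Proof.
rewrite /prox_hull leeNl; apply/ereal_infP => _ [y _ <-].
rewrite -oppeB ?fin_num_adde_defl // leeN2 leeBlDr //.
by rewrite -sqnormN opprB moreau_le.
Qed.

(* Completing the square: the envelope of the touching quadratic at [x + lam v]
   is [f x + lam / 2 * |v|^2]. *)
Lemma moreau_ge_of_subdiff x v : prox_subdiff lam f x v -> f x \is a fin_num ->
  ((fine (f x) + lam / 2 * sqnorm v)%:E <= moreau lam f (x + lam *: v))%E.
Proof.
move=> xv /fineK fx; set a := fine (f x) in fx *.
apply/ereal_infP => _ [w _ <-]; have := xv.2 w; rewrite -fx.
case: (f w) => [b||]; last 2 first.
- by rewrite addye ?leey.
- by rewrite leeNy_eq.
rewrite -!EFinD !lee_fin => le_b.
have -> : w - (x + lam *: v) = (w - x) - lam *: v.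
  by rewrite opprD addrA.
rewrite sqnormB sqnormZ innerZr (innerC (w - x)).
have -> : (sqnorm (w - x) - 2 * (lam * inner v (w - x)) + lam ^+ 2 * sqnorm v)
    / (2 * lam) = sqnorm (w - x) / (2 * lam) - inner v (w - x) + lam / 2 * sqnorm v.
  by field; rewrite gt_eqF.
lra.
Qed.

Lemma prox_hull_eq_of_subdiff x v : prox_subdiff lam f x v -> f x \is a fin_num ->
  prox_hull lam f x = f x.
Proof.
move=> xv fx_fin; apply/le_anti; rewrite prox_hull_le /= /prox_hull leeNr.
apply: le_trans (ereal_inf_lbound _) _; first by exists (x + lam *: v).
rewrite -(fineK fx_fin) addrAC subrr add0r sqnormZ.
have -> : lam ^+ 2 * sqnorm v / (2 * lam) = lam / 2 * sqnorm v.
  by field; rewrite gt_eqF.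
rewrite -oppeB ?fin_num_adde_defl // leeN2 leeBrDr // -EFinD.
exact: moreau_ge_of_subdiff.
Qed.

(* The slope [u] is read off a point [z] almost attaining the outer infimum
   defining [h_lam f x]. *)
Lemma prox_hull_approx_subdiff x eps : prox_hull lam f x = f x ->
  f x \is a fin_num -> 0 < eps -> exists u, forall w,
  ((fine (f x) + inner u (w - x) - sqnorm (w - x) / (2 * lam) - eps)%:E <= f w)%E.
Proof.
move=> hull_x /fineK fx eps_gt0; set a := fine (f x) in fx *.
have inf_x : moreau lam (fun y => - moreau lam f y)%E x = (- a)%:E.
  by rewrite EFinN fx -hull_x /prox_hull oppeK.
have inf_fin : moreau lam (fun y => - moreau lam f y)%E x \is a fin_num.
  by rewrite inf_x.
have [_ [z _ <-]] := lb_ereal_inf_adherent eps_gt0 inf_fin.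
rewrite -/(moreau lam (fun y => - moreau lam f y)%E x) inf_x -EFinD.
have := moreau_le z x; rewrite -fx -EFinD.
case mz: (moreau lam f z) => [m||] //.
rewrite lee_fin -EFinN -EFinD lte_fin => _ near_inf.
exists (lam^-1 *: (z - x)) => w; have := moreau_le z w; rewrite mz.
case: (f w) => [b||]; last 2 first.
- by move=> _; rewrite leey.
- by rewrite addNye leeNy_eq.
rewrite -EFinD !lee_fin innerZl => le_m.
have wz : w - z = (w - x) - (z - x) by rewrite opprB addrA subrK.
rewrite wz sqnormB (innerC (w - x)) in le_m.
have split_sq : (sqnorm (w - x) - 2 * inner (z - x) (w - x) + sqnorm (z - x))
    / (2 * lam) = sqnorm (w - x) / (2 * lam) - lam^-1 * inner (z - x) (w - x)
      + sqnorm (z - x) / (2 * lam).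
  by field; rewrite gt_eqF.
rewrite split_sq in le_m; lra.
Qed.

Lemma prox_subdiff_le_diff x v h : (\forall y \near x, f y \is a fin_num) ->
  differentiable fin_f x -> prox_subdiff lam f x v -> inner v h <= 'd fin_f x h.
Proof.
move=> fin_near dfx xv; apply/ler_addgt0Pr => e e_gt0.
have e2_gt0 : 0 < e / 2 by rewrite divr_gt0.
have /filter_ex [t [t_gt0 fin_t dq_t small_t]] : \forall t \near 0^'+,
    [/\ 0 < t, f (x + t *: h) \is a fin_num,
        `|(fin_f (x + t *: h) - fin_f x) / t - 'd fin_f x h| < e / 2 &
        t * (sqnorm h / (2 * lam)) < e / 2].
  near=> t; split; near: t.
  - exact: nbhs_right_gt.
  - exact: near_right0_shift fin_near.
  - by apply: filterS (diff_quotient_near h dfx e2_gt0).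
  - exact: near_right0_mulr_lt.
have := prox_subdiff_fine_le xv (nbhs_singleton fin_near) fin_t.
rewrite (addrAC x) subrr add0r innerZr sqnormZ.
set Q := (fin_f (x + t *: h) - fin_f x) / t in dq_t.
have QE : fin_f (x + t *: h) = fin_f x + t * Q by rewrite /Q mulrC divfK ?gt_eqF ?subrKC.
rewrite QE => le_t.
have : t * inner v h <= t * (Q + t * (sqnorm h / (2 * lam))) by lra.
rewrite ler_pM2l // => le_Q.
have := le_lt_trans (ler_norm _) dq_t; lra.
Unshelve. all: by end_near.
Qed.

Lemma prox_subdiff_eq_grad x v : (\forall y \near x, f y \is a fin_num) ->
  differentiable fin_f x -> prox_subdiff lam f x v -> v = grad fin_f x.
Proof.
move=> fin_near dfx xv; apply: inner_inj => h; rewrite -gradE.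
apply/le_anti; rewrite prox_subdiff_le_diff //=.
by have := prox_subdiff_le_diff (- h) fin_near dfx xv; rewrite innerNr linearN lerN2.
Qed.

Lemma prox_subdiff_set1_grad x : (\forall y \near x, f y \is a fin_num) ->
  differentiable fin_f x -> prox_subdiff lam f x (grad fin_f x) ->
  prox_subdiff lam f x = [set grad fin_f x].
Proof.
move=> fin_near dfx xg; apply/seteqP; split => [v xv|_ ->] //=.
exact: prox_subdiff_eq_grad.
Qed.

Lemma prox_subdiff_grad_of_hull x : (\forall y \near x, f y \is a fin_num) ->
  differentiable fin_f x -> prox_hull lam f x = f x ->
  prox_subdiff lam f x (grad fin_f x).
Proof.
move=> fin_near dfx hull_x; have fin_x := nbhs_singleton fin_near.
split=> [|y]; first by rewrite -(fineK fin_x) ltry.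
set d := y - x; set v := grad fin_f x.
case fy: (f y) => [b||]; last 2 first.
- by rewrite leey.
- have [u /(_ y)] := prox_hull_approx_subdiff hull_x fin_x ltr01.
  by rewrite fy leeNy_eq.
rewrite -(fineK fin_x) -EFinD lee_fin; apply/ler_addgt0Pr => e e_gt0.
have e4_gt0 : 0 < e / 4 by rewrite divr_gt0.
have /filter_ex [t [t_gt0 t_lt1 fin_t dq_t small_t]] : \forall t \near 0^'+,
    [/\ 0 < t, t < 1, f (x + t *: - d) \is a fin_num,
        `|(fin_f (x + t *: - d) - fin_f x) / t - 'd fin_f x (- d)| < e / 4 &
        t * (sqnorm d / (2 * lam)) < e / 4].
  near=> t; split; near: t.
  - exact: nbhs_right_gt.
  - exact: nbhs_right_lt.
  - exact: near_right0_shift fin_near.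
  - by apply: filterS (diff_quotient_near (- d) dfx e4_gt0).
  - exact: near_right0_mulr_lt.
have [u approx] := prox_hull_approx_subdiff hull_x fin_x (mulr_gt0 t_gt0 e4_gt0).
have := approx y; rewrite fy lee_fin -/d => le_y.
have := approx (x + t *: - d); rewrite -(fineK fin_t) lee_fin.
rewrite (addrAC x) subrr add0r innerZr innerNr sqnormZ sqnormN.
set Q := (fin_f (x + t *: - d) - fin_f x) / t in dq_t.
have QE : fin_f (x + t *: - d) = fin_f x + t * Q by rewrite /Q mulrC divfK ?gt_eqF ?subrKC.
rewrite QE => le_t.
have : t * (- inner u d) <= t * (Q + t * (sqnorm d / (2 * lam)) + e / 4) by lra.
rewrite ler_pM2l // => le_Q.
have := le_lt_trans (ler_norm _) dq_t; rewrite linearN gradE -/v => dq.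
have : t * (e / 4) < e / 4 by rewrite gtr_pMl.
lra.
Unshelve. all: by end_near.
Qed.

Section PairInequalities.
Variables (x h v0 v : V).
Hypotheses (xv0 : prox_subdiff lam f x v0) (xhv : prox_subdiff lam f (x + h) v)
  (fin_x : f x \is a fin_num) (fin_xh : f (x + h) \is a fin_num).

Lemma prox_subdiff_remainder :
  `|fin_f (x + h) - fin_f x - inner v0 h| <= `|inner (v - v0) h| + sqnorm h / (2 * lam).
Proof.
have := prox_subdiff_fine_le xv0 fin_x fin_xh.
have := prox_subdiff_fine_le xhv fin_xh fin_x.
have -> : x - (x + h) = - h by rewrite opprD addNKr.
rewrite (addrC x) addrK sqnormN innerNr innerBl => upper lower.
have abs_ge := ler_norm (inner v h - inner v0 h).
have abs_ge' := ler_norm (- (inner v h - inner v0 h)); rewrite normrN in abs_ge'.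
rewrite ler_norml; apply/andP; split; lra.
Qed.

Lemma prox_subdiff_pair y : f y \is a fin_num ->
  inner (v - v0) (y - x - h) <=
    fine (f y) - fine (f x) - inner v0 (y - x) + sqnorm (y - x) / (2 * lam)
    + (sqnorm h - inner (y - x) h) / lam.
Proof.
move=> fin_y; have := prox_subdiff_fine_le xv0 fin_x fin_xh.
have := prox_subdiff_fine_le xhv fin_xh fin_y.
have -> : y - (x + h) = y - x - h by rewrite opprD addrA.
rewrite (addrC x) addrK sqnormB !(innerBr _ (y - x) h) !(innerBl v v0).
have -> : (sqnorm (y - x) - 2 * inner (y - x) h + sqnorm h) / (2 * lam) =
  sqnorm (y - x) / (2 * lam) - (inner (y - x) h) / lam + sqnorm h / (2 * lam).
  by field; rewrite gt_eqF.
have -> : (sqnorm h - inner (y - x) h) / lam = 2 * (sqnorm h / (2 * lam)) - inner (y - x) h / lam.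
  by field; rewrite gt_eqF.
lra.
Qed.

Lemma prox_subdiff_pair_retract y : `|h| <= 1 -> f y \is a fin_num ->
  inner (ball_retract (v - v0)) (y - x) <=
    fine (f y) - fine (f x) - inner v0 (y - x) + sqnorm (y - x) / (2 * lam)
    + (1 + `|y - x|) * (n%:R * (lam^-1 + 1) * `|h|).
Proof.
move=> h_le1 fin_y; have := prox_subdiff_pair fin_y.
set s := v - v0; set d := y - x.
set D := fine (f y) - fine (f x) - inner v0 d + sqnorm d / (2 * lam) => pair.
have D_ge0 : 0 <= D.
  by have := prox_subdiff_fine_le xv0 fin_x fin_y; rewrite -/d /D; lra.
set k := (Num.max 1 `|s|)^-1.
have k_gt0 : 0 < k by rewrite invr_gt0 max1_gt0.
have k_le1 : k <= 1 by rewrite invf_le1 ?max1_gt0 // le_max lexx.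
set B := n%:R * (1 + `|d|) * `|h| / lam.
have E_le : (sqnorm h - inner d h) / lam <= B.
  rewrite ler_pM2r ?invr_gt0 //.
  have := sqnorm_le h; have := ler_norm_inner d h.
  have := ler_norm (- inner d h); rewrite normrN.
  have : n%:R * `|h| ^+ 2 <= n%:R * `|h| by rewrite ler_wpM2l // expr2 ler_piMl.
  lra.
have B_ge0 : 0 <= B by rewrite /B divr_ge0 ?mulr_ge0 ?addr_ge0 // ltW.
have retract_h : inner (ball_retract s) h <= n%:R * `|h|.
  apply: le_trans (ler_norm _) _; apply: le_trans (ler_norm_inner _ _) _.
  by rewrite norm_ball_retract ler_wpM2r // ler_piMr // ge_min lexx.
have -> : inner (ball_retract s) d = k * inner s (d - h) + inner (ball_retract s) h.
  by rewrite -innerZl -innerDr subrK.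
have : k * inner s (d - h) <= k * (D + (sqnorm h - inner d h) / lam).
  by rewrite ler_wpM2l // ltW.
have : k * D <= D by rewrite ler_piMl.
have : k * ((sqnorm h - inner d h) / lam) <= B.
  exact: le_trans (ler_wpM2l (ltW k_gt0) E_le) (ler_piMl B_ge0 k_le1).
have : 0 <= `|d| * (n%:R * `|h|) by rewrite !mulr_ge0.
rewrite /B; lra.
Qed.

End PairInequalities.

Lemma prox_subdiff_cluster x v0 (w_ : nat -> V) (r_ : nat -> R) w :
  prox_subdiff lam f x v0 -> f x \is a fin_num -> r_ @ \oo --> 0 ->
  (forall k y, f y \is a fin_num -> inner (w_ k) (y - x) <=
     fine (f y) - fine (f x) - inner v0 (y - x) + sqnorm (y - x) / (2 * lam)
     + (1 + `|y - x|) * r_ k) ->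
  cluster (w_ @ \oo) w -> prox_subdiff lam f x (v0 + w).
Proof.
move=> xv0 fin_x r_cvg0 approx w_cl; split=> [|y]; first exact: xv0.1.
case fy: (f y) => [b||]; last 2 first.
- by rewrite leey.
- by have := xv0.2 y; rewrite fy -(fineK fin_x) leeNy_eq.
have fin_y : f y \is a fin_num by rewrite fy.
rewrite -(fineK fin_x) -EFinD lee_fin.
set d := y - x; set D := b - fine (f x) - inner v0 d + sqnorm d / (2 * lam).
suff : inner d w <= D by rewrite innerDl (innerC w) /D; lra.
apply/ler_addgt0Pr => eta eta_gt0.
have d1_gt0 : 0 < 1 + `|d| by rewrite ltr_pwDl.
have closed_half : closed [set u : V | inner d u <= D + eta].
  exact: (continuous_closedP (inner d)).1 (@inner_continuous _ _ d) _
    (@closed_le _ (D + eta)).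
suff ev_half : \forall k \near \oo, inner d (w_ k) <= D + eta.
  exact: cluster_closed closed_half ev_half w w_cl.
near=> k; have : `|0 - r_ k| < eta / (1 + `|d|).
  by near: k; exact: cvgr_dist_lt _ _ r_cvg0 _ (divr_gt0 eta_gt0 d1_gt0).
rewrite sub0r normrN ltr_pdivlMr // mulrC => small_r.
rewrite innerC; apply: le_trans (approx k y fin_y) _; rewrite fy /= -/d -/D lerD2l.
exact: le_trans (ler_wpM2l (ltW d1_gt0) (ler_norm _)) (ltW small_r).
Unshelve. all: by end_near.
Qed.

Lemma prox_subdiff_near_close x v0 : (\forall y \near x, f y \is a fin_num) ->
  prox_subdiff lam f x = [set v0] -> forall e, 0 < e ->
  \forall y \near x, forall v, prox_subdiff lam f y v -> `|v - v0| < e.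
Proof.
move=> fin_near x_set1 e e_gt0; have fin_x := nbhs_singleton fin_near.
have xv0 : prox_subdiff lam f x v0 by rewrite x_set1.
apply: contrapT => far.
have bad k : exists hv : V * V, [/\ `|hv.1| < harmonic k,
    f (x + hv.1) \is a fin_num, prox_subdiff lam f (x + hv.1) hv.2
    & e <= `|hv.2 - v0|].
  apply: contrapT => no_bad; apply: far; apply/nbhs0P.
  near=> h => v xhv; rewrite ltNge; apply/negP => far_v; apply: no_bad.
  by exists (h, v); split => //=; near: h; move/nbhs0P: fin_near.
have [hv_ hv_P] := choice bad.
pose w_ k := ball_retract ((hv_ k).2 - v0).
have [w w_cl] : exists w, cluster (w_ @ \oo) w.
  by apply: (@cluster_of_bounded_seq _ _ _ 1) => k; rewrite norm_ball_retract ge_min lexx.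
have w_ge : Num.min 1 e <= `|w|.
  have closed_ge_min : closed [set u : V | Num.min 1 e <= `|u|].
    exact: (continuous_closedP (fun u : V => `|u|)).1 norm_continuous _
      (@closed_ge _ (Num.min 1 e)).
  suff ev_ge : \forall k \near \oo, Num.min 1 e <= `|w_ k|.
    exact: cluster_closed closed_ge_min ev_ge w w_cl.
  apply: nearW => k; have [_ _ _ far_k] := hv_P k.
  by rewrite /= norm_ball_retract le_min !ge_min lexx far_k orbT.
have xw : prox_subdiff lam f x (v0 + w).
  set C := n%:R * (lam^-1 + 1).
  have C_ge0 : 0 <= C by rewrite mulr_ge0 // addr_ge0 // invr_ge0 ltW.
  apply: (prox_subdiff_cluster (r_ := fun k => C * `|(hv_ k).1|) xv0 fin_x _ _ w_cl).
    apply: (squeeze_harmonic (C := C)) => k; have [h_lt _ _ _] := hv_P k.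
    by rewrite mulr_ge0 //= ler_wpM2l // ltW.
  move=> k y fin_y; have [h_lt fin_xh xhv _] := hv_P k.
  apply: prox_subdiff_pair_retract => //.
  by rewrite ltW // (lt_le_trans h_lt) // invf_le1 // ler1n.
have w0 : w = 0.
  by move: xw; rewrite x_set1 => /(congr1 (fun u => u - v0)); rewrite subrr addrC addKr.
by move: w_ge; rewrite w0 normr0 ge_min ler10 leNgt e_gt0.
Unshelve. all: by end_near.
Qed.

Lemma prox_subdiff_differentiable x v0 :
  (\forall y \near x, f y \is a fin_num /\ exists v, prox_subdiff lam f y v) ->
  prox_subdiff lam f x = [set v0] -> differentiable fin_f x.
Proof.
move=> sub_near x_set1.
have fin_near : \forall y \near x, f y \is a fin_num by apply: filterS sub_near => y [].
have xv0 : prox_subdiff lam f x v0 by rewrite x_set1.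
apply: (@differentiable_of_inner_remainder _ _ _ _ v0) => e e_gt0.
set N : R := n%:R; set c := (2 * lam)^-1.
have c_gt0 : 0 < c by rewrite invr_gt0 mulr_gt0.
have N1_gt0 : 0 < 2 * (N + 1) by rewrite mulr_gt0 // ltr_pwDr.
have cN1_gt0 : 0 < 2 * (c * N + 1) by rewrite mulr_gt0 // ltr_pwDr // mulr_ge0 // ltW.
have close := prox_subdiff_near_close fin_near x_set1 (divr_gt0 e_gt0 N1_gt0).
move/nbhs0P : sub_near => sub_near; move/nbhs0P : close => close.
near=> h; have [fin_xh [v xhv]] : f (x + h) \is a fin_num /\ exists v, prox_subdiff lam f (x + h) v.
  by near: h.
have v_close : `|v - v0| < e / (2 * (N + 1)) by move: v xhv; near: h.
have h_small : `|h| < e / (2 * (c * N + 1)).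
  by near: h; apply: filterS (nbhs0_lt (divr_gt0 e_gt0 cN1_gt0)).
apply: le_trans (prox_subdiff_remainder xv0 xhv (nbhs_singleton fin_near) fin_xh) _.
have Nv_le : N * `|v - v0| <= e / 2.
  by move: v_close; rewrite ltr_pdivlMr //; have := normr_ge0 (v - v0); lra.
have cNh_le : c * N * `|h| <= e / 2.
  by move: h_small; rewrite ltr_pdivlMr //; have := normr_ge0 h; lra.
have := le_trans (ler_norm_inner (v - v0) h) (ler_wpM2r (normr_ge0 h) Nv_le).
have := ler_wpM2l (ltW c_gt0) (sqnorm_le h).
have := ler_wpM2r (normr_ge0 h) cNh_le.
rewrite expr2 -/N -/c; lra.
Unshelve. all: by end_near.
Qed.

Section GlobalConvexity.
Hypothesis f_fin : forall y, f y \is a fin_num.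

Let phi z := fine (f z) + lam^-1 * j z.

Let phiE z : (f z + (lam^-1 * j z)%:E)%E = (phi z)%:E.
Proof. by rewrite EFinD fineK. Qed.

Lemma prox_subdiff_affine_minorant x v w : prox_subdiff lam f x v ->
  fine (f x) + lam^-1 * j x + inner (v + lam^-1 *: x) (w - x) <=
  fine (f w) + lam^-1 * j w.
Proof.
move=> xv; have := prox_subdiff_fine_le xv (f_fin x) (f_fin w).
rewrite /j innerDl innerZl (innerBr x) sqnormB (innerC w x) -/(sqnorm x) invfM.
lra.
Qed.

Lemma convex_efun_of_prox_subdiff : (forall x, exists v, prox_subdiff lam f x v) ->
  convex_efun (fun x => (f x + (lam^-1 * j x)%:E)%E).
Proof.
move=> sub x y t t01.
have supp z : exists s, forall w, phi z + inner s (w - z) <= phi w.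
  have [v zv] := sub z; exists (v + lam^-1 *: z) => w.
  exact: prox_subdiff_affine_minorant.
rewrite /= !phiE -!EFinM -EFinD.
exact (convex_of_supporting_affine supp x y t01).
Qed.

Lemma prox_subdiff_grad_of_convex x :
  convex_efun (fun x => (f x + (lam^-1 * j x)%:E)%E) ->
  differentiable fin_f x -> prox_subdiff lam f x (grad fin_f x).
Proof.
move=> cvx dfx; split=> [|y]; first by rewrite -(fineK (f_fin x)) ltry.
rewrite -(fineK (f_fin x)) -(fineK (f_fin y)) -EFinD lee_fin.
set d := y - x; apply/ler_addgt0Pr => e e_gt0.
have /filter_ex [t [t_gt0 t_lt1 dq_t]] : \forall t \near 0^'+,
    [/\ 0 < t, t < 1 &
        `|(fin_f (x + t *: d) - fin_f x) / t - 'd fin_f x d| < e].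
  near=> t; split; near: t.
  - exact: nbhs_right_gt.
  - exact: nbhs_right_lt.
  - by apply: filterS (diff_quotient_near d dfx e_gt0).
have t01 : 0 <= t <= 1 by rewrite !ltW.
have := cvx y x t t01; rewrite /= !phiE -!EFinM -EFinD => cvx_e.
have cvx_t : phi (x + t *: d) <= t * phi y + (1 - t) * phi x.
  have -> : x + t *: d = t *: y + (1 - t) *: x by apply/rowP => i; rewrite !mxE; ring.
  exact cvx_e.
have jy : j y = (sqnorm x + 2 * inner x d + sqnorm d) / 2.
  by rewrite /j -sqnormD /d addrC subrK.
have jxd : j (x + t *: d) = (sqnorm x + 2 * (t * inner x d) + t ^+ 2 * sqnorm d) / 2.
  by rewrite /j sqnormD sqnormZ innerZr.
rewrite /phi jy jxd /j in cvx_t.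
set Q := (fin_f (x + t *: d) - fin_f x) / t in dq_t.
have QE : fin_f (x + t *: d) = fin_f x + t * Q by rewrite /Q mulrC divfK ?gt_eqF ?subrKC.
rewrite QE in cvx_t.
have sq_ge0 : 0 <= lam^-1 * t ^+ 2 * sqnorm d.
  by rewrite !mulr_ge0 ?sqr_ge0 ?sqnorm_ge0 ?invr_ge0 // ltW.
have : t * Q <= t * (fine (f y) - fine (f x) + lam^-1 * sqnorm d / 2) by lra.
rewrite ler_pM2l // => le_Q.
rewrite distrC in dq_t; have := le_lt_trans (ler_norm _) dq_t.
rewrite gradE invfM; lra.
Unshelve. all: by end_near.
Qed.

End GlobalConvexity.

Section Characterization.
Hypothesis f_proper : forall y, f y != -oo%E.

Lemma prox_subdiff_set1_on_openP (U : set V) : open U ->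
  (forall x, U x -> exists v, prox_subdiff lam f x = [set v]) <->
  (forall x, U x -> prox_hull lam f x = f x) /\ (forall x, U x -> ediff_at f x).
Proof.
move=> U_open; have U_near x : U x -> \forall y \near x, U y by move/U_open.
split=> [set1_U|[hull_U diff_U] x Ux].
  have sub_U y : U y -> f y \is a fin_num /\ exists v, prox_subdiff lam f y v.
    move=> Uy; have [v yv] := set1_U y Uy.
    have yv' : prox_subdiff lam f y v by rewrite yv.
    by split; [exact: prox_subdiff_fin_num (f_proper y) yv' | exists v].
  split=> x Ux; have [fin_x [v xv]] := sub_U x Ux.
    exact: prox_hull_eq_of_subdiff xv fin_x.
  have [v0 x_set1] := set1_U x Ux; split => //.
  apply: (prox_subdiff_differentiable _ x_set1).
  exact: filterS sub_U (U_near x Ux).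
have fin_near : \forall y \near x, f y \is a fin_num.
  by apply: filterS (U_near x Ux) => y /diff_U[].
exists (grad fin_f x); apply: (prox_subdiff_set1_grad fin_near (diff_U x Ux).2).
exact (prox_subdiff_grad_of_hull fin_near (diff_U x Ux).2 (hull_U x Ux)).
Qed.

Lemma prox_subdiff_set1P :
  (forall x, exists v, prox_subdiff lam f x = [set v]) <->
  convex_efun (fun x => (f x + (lam^-1 * j x)%:E)%E) /\ (forall x, ediff_at f x).
Proof.
split=> [set1_f|[cvx diff_f] x].
  have [_ diff_f] := (prox_subdiff_set1_on_openP openT).1 (fun x _ => set1_f x).
  split=> [|x]; last exact: diff_f.
  apply: convex_efun_of_prox_subdiff (fun y => (diff_f y I).1) _ => y.
  by have [v yv] := set1_f y; exists v; rewrite yv.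
have fin_f_all y : f y \is a fin_num by have [] := diff_f y.
have fin_near : \forall y \near x, f y \is a fin_num by exact: filterE.
exists (grad fin_f x); apply: (prox_subdiff_set1_grad fin_near (diff_f x).2).
exact (prox_subdiff_grad_of_convex fin_f_all cvx (diff_f x).2).
Qed.

End Characterization.

End ProximalSubdifferential.

Theorem mainTheorem8 (R : realType) (n : nat) (f : 'rV[R]_n -> \bar R) (lam : R) :
  proper_efun f -> lower_semicontinuous f -> prox_bounded f ->
  (0 < prox_threshold f)%E -> 0 < lam -> (lam%:E < prox_threshold f)%E ->
  (forall U : set 'rV[R]_n, U !=set0 -> open U -> convex_set U ->
    ((forall x, U x -> exists v, prox_subdiff lam f x = [set v]) <->
     ((forall x, U x -> prox_hull lam f x = f x) /\ (forall x, U x -> ediff_at f x))))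
  /\
  ((forall x, exists v, prox_subdiff lam f x = [set v]) <->
   (convex_efun (fun x => (f x + (lam^-1 * j x)%:E)%E) /\ (forall x, ediff_at f x))).
Proof.
move=> [f_proper _] _ _ _ lam_gt0 _; split.
  by move=> U _ U_open _; exact: prox_subdiff_set1_on_openP.
exact: prox_subdiff_set1P.
Qed.
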